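(* Let $\mathsf{L}$ be a logic, $\mathsf{L}'$ a fragment of $\mathsf{L}$, $\mathcal{C}$ a class of $\mathsf{L}$-models and $\Theta$ an $(\mathsf{L},\mathcal{C})$-pair. Let $\mathcal{S}\subseteq\mathcal{C}$ be a finite set of $\mathsf{L}$-models and $\mathcal{R}\subseteq\mathsf{Fm}^f_{\mathsf{L}}$ an $(\mathsf{L},\mathcal{S})$-learning property. If some (final) $\mathsf{L}'$-formula belongs to $\mathcal{R}$, then some $\mathsf{L}'$-formula $\psi\in\mathcal{R}$ satisfies $\mathsf{sz}(\psi)\le\sum_{\tau\in\mathcal{T}}\prod_{M\in\mathcal{S}}|\mathsf{SEM}_M(\tau)|$.
   Context: A logic $\mathsf{L}$ is given by $(\mathcal{T},\mathcal{T}_f,\mathsf{Op},(\tau_o)_{o\in\mathsf{Op}},T)$: a non-empty finite set $\mathcal{T}$ of types, final types $\emptyset\ne\mathcal{T}_f\subseteq\mathcal{T}$, operators $\mathsf{Op}=\mathsf{Op}_0\uplus\mathsf{Op}_1\uplus\mathsf{Op}_2$ (by arity) with $\mathsf{Op}_0\ne\emptyset$, each $o$ having a type $\tau_o$ and allowed argument-type sets $T(o,i)\subseteq\mathcal{T}$. Formulas of type $\tau$ ($\mathsf{Fm}_{\mathsf{L}}(\tau)$) are built inductively: $o\in\mathsf{Op}_0$ has type $\tau_o$; $o(\varphi_1)$, resp. $o(\varphi_1,\varphi_2)$, has type $\tau_o$ when each $\varphi_i$ has a type in $T(o,i)$. $\mathsf{Fm}_{\mathsf{L}}(X)=\bigcup_{\tau\in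 X}\mathsf{Fm}_{\mathsf{L}}(\tau)$, final formulas $\mathsf{Fm}^f_{\mathsf{L}}=\mathsf{Fm}_{\mathsf{L}}(\mathcal{T}_f)$. A fragment $\mathsf{L}'$ uses the same syntax with an operator set $\mathsf{Op}'\subseteq\mathsf{Op}$. $\mathsf{sz}(\varphi)$ is the number of distinct subformulas of $\varphi$. An $\mathsf{L}$-model $M$ has a satisfaction relation $M\models\varphi$ for final formulas; a class of models is a set of them. An $(\mathsf{L},\mathcal{S})$-learning property is a set $\mathcal{R}\subseteq\mathsf{Fm}^f_{\mathsf{L}}$ such that, with $\mathcal{R}_{\mathcal{S}}=\{\{M\in\mathcal{S}: M\models\varphi\}:\varphi\in\mathcal{R}\}$, every final formula $\varphi$ satisfies: $\{M\in\mathcal{S}:M\models\varphi\}\in\mathcal{R}_{\mathcal{S}}$ iff $\varphi\in\mathcal{R}$. An $(\mathsf{L},M)$-pair: a finite set $\mathsf{SEM}_M=\bigcup_\tau\mathsf{SEM}_M(\tau)$ with pairwise disjoint parts and $\mathsf{sem}_M:\mathsf{Fm}_{\mathsf{L}}\to\mathsf{SEM}_M$ sending type-$\tau$ formulas into $\mathsf{SEM}_M(\tau)$; $\mathsf{SEM}_M(X)=\bigcup_{\tau\in X}\mathsf{SEM}_M(\tau)$. It captures the $\mathsf{L}$-semantics if final formulas of the same type with the same $\mathsf{sem}_M$-value are either both satisfied or both not satisfied by $M$. It satisfies the inductive property if for every $o\in\mathsf{Op}_1$ there is $\mathsf{sem}^o_M:\mathsf{SEM}_M(T(o,1))\to\mathsf{SEM}_M(\tau_o)$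 with $\mathsf{sem}_M(o(\varphi_1))=\mathsf{sem}^o_M(\mathsf{sem}_M(\varphi_1))$ for all $\varphi_1\in\mathsf{Fm}_{\mathsf{L}}(T(o,1))$, and for every $o\in\mathsf{Op}_2$ there is $\mathsf{sem}^o_M:\mathsf{SEM}_M(T(o,1))\times\mathsf{SEM}_M(T(o,2))\to\mathsf{SEM}_M(\tau_o)$ with $\mathsf{sem}_M(o(\varphi_1,\varphi_2))=\mathsf{sem}^o_M(\mathsf{sem}_M(\varphi_1),\mathsf{sem}_M(\varphi_2))$. An $(\mathsf{L},\mathcal{C})$-pair is a family $(\Theta_M)_{M\in\mathcal{C}}$ of $(\mathsf{L},M)$-pairs $\Theta_M=(\mathsf{SEM}_M,\mathsf{sem}_M)$ each capturing the $\mathsf{L}$-semantics and satisfying the inductive property. *)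

From HB Require Import structures.
From mathcomp Require Import all_boot.
From Stdlib Require List.
Set Implicit Arguments. Unset Strict Implicit. Unset Printing Implicit Defensive.

(* A logic L = (T, T_f, Op, (tau_o), T(o,i)).  Op = Op0 ⊎ Op1 ⊎ Op2 by arity. *)
Record logic := Logic {
  ty : finType;
  final : {set ty};
  op0 : eqType; op1 : eqType; op2 : eqType;
  tau0 : op0 -> ty; tau1 : op1 -> ty; tau2 : op2 -> ty;
  arg1 : op1 -> {set ty};
  arg21 : op2 -> {set ty};
  arg22 : op2 -> {set ty};
  ty_inhabited : inhabited ty;
  final_nonempty : final != set0;
  op0_inhabited : inhabited op0 }.

Inductive fm (L : logic) :=
| F0 of op0 L
| F1 of op1 L & fm L
| F2 of op2 L & fm L & fm L.

Arguments F0 {L}. Arguments F1 {L}. Arguments F2 {L}.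

Fixpoint fm_eqb (L : logic) (a b : fm L) : bool :=
  match a, b with
  | F0 o, F0 o' => o == o'
  | F1 o a1, F1 o' b1 => (o == o') && fm_eqb a1 b1
  | F2 o a1 a2, F2 o' b1 b2 => [&& o == o', fm_eqb a1 b1 & fm_eqb a2 b2]
  | _, _ => false
  end.

Lemma fm_eqP (L : logic) : Equality.axiom (@fm_eqb L).
Proof.
elim=> [o|o a IH|o a IHa c IHc] [o'|o' b|o' b d] /=; try by constructor.
- by apply: (iffP eqP) => [->|[]].
- case: (o =P o') => [->|ne] /=; last by constructor => -[].
  by case: (IH b) => [->|ne]; constructor => //; case.
- case: (o =P o') => [->|ne] /=; last by constructor => -[].
  case: (IHa b) => [->|ne] /=; last by constructor => -[].
  by case: (IHc d) => [->|ne]; constructor => //; case.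
Qed.

HB.instance Definition _ (L : logic) := hasDecEq.Build (fm L) (@fm_eqP L).

Section Syntax.
Variable L : logic.

Definition fm_ty (phi : fm L) : ty L :=
  match phi with F0 o => tau0 o | F1 o _ => tau1 o | F2 o _ _ => tau2 o end.

Fixpoint wt (phi : fm L) : bool :=
  match phi with
  | F0 _ => true
  | F1 o a => wt a && (fm_ty a \in arg1 o)
  | F2 o a b => [&& wt a, fm_ty a \in arg21 o, wt b & fm_ty b \in arg22 o]
  end.

Definition has_type (phi : fm L) (tau : ty L) : bool := wt phi && (fm_ty phi == tau).
Definition in_Fm (X : {set ty L}) (phi : fm L) : bool := wt phi && (fm_ty phi \in X).
Definition is_final (phi : fm L) : bool := in_Fm (final L) phi.

Fixpoint subfms (phi : fm L) : seq (fm L) :=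
  match phi with
  | F0 _ => [:: phi]
  | F1 _ a => phi :: subfms a
  | F2 _ a b => phi :: subfms a ++ subfms b
  end.
Definition sz (phi : fm L) : nat := size (undup (subfms phi)).

End Syntax.

Record fragment (L : logic) := Fragment {
  fop0 : pred (op0 L); fop1 : pred (op1 L); fop2 : pred (op2 L) }.

Fixpoint in_frag (L : logic) (L' : fragment L) (phi : fm L) : bool :=
  match phi with
  | F0 o => fop0 L' o
  | F1 o a => fop1 L' o && in_frag L' a
  | F2 o a b => [&& fop2 L' o, in_frag L' a & in_frag L' b]
  end.

Definition learning_property (L : logic) (Model : Type)
  (sat : Model -> fm L -> Prop) (S : list Model) (R : fm L -> Prop) : Prop :=
  (forall phi, R phi -> is_final phi) /\
  (forall phi, is_final phi ->
     ((exists2 psi, R psi & forall M, List.In M S -> (sat M phi <-> sat M psi))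
      <-> R phi)).

(* (L,M)-pair: a finite set SEM_M whose elements are tagged by their type
   (semty), so SEM_M(tau) = {s | semty s = tau} are pairwise disjoint with
   union SEM_M; and sem_M : Fm_L -> SEM_M respecting types. *)
Definition sem_part (L : logic) (SEM : finType) (semty : SEM -> ty L)
  (X : {set ty L}) (s : SEM) : bool := semty s \in X.

Definition LM_pair (L : logic) (Model : Type) (sat : Model -> fm L -> Prop)
  (M : Model) (SEM : finType) (semty : SEM -> ty L) (sem : fm L -> SEM) : Prop :=
  (forall phi, wt phi -> semty (sem phi) = fm_ty phi) /\
  (forall phi psi, is_final phi -> is_final psi -> fm_ty phi = fm_ty psi ->
     sem phi = sem psi -> (sat M phi <-> sat M psi)) /\
  (forall o : op1 L, exists f : SEM -> SEM,
     (forall s, semty s \in arg1 o -> semty (f s) = tau1 o) /\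
     (forall phi, in_Fm (arg1 o) phi -> sem (F1 o phi) = f (sem phi))) /\
  (forall o : op2 L, exists f : SEM -> SEM -> SEM,
     (forall s t, semty s \in arg21 o -> semty t \in arg22 o ->
        semty (f s t) = tau2 o) /\
     (forall phi psi, in_Fm (arg21 o) phi -> in_Fm (arg22 o) psi ->
        sem (F2 o phi psi) = f (sem phi) (sem psi))).

Definition LC_pair (L : logic) (Model : Type) (sat : Model -> fm L -> Prop)
  (C : Model -> Prop) (SEM : Model -> finType)
  (semty : forall M, SEM M -> ty L) (sem : forall M, fm L -> SEM M) : Prop :=
  forall M, C M -> LM_pair sat M (@semty M) (@sem M).

Definition card_sem (L : logic) (SEM : finType) (semty : SEM -> ty L) (tau : ty L) : nat :=
  #|[pred s : SEM | semty s == tau]|.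

From HB Require Import structures.
From mathcomp Require Import all_boot.
From Stdlib Require List.
From Stdlib Require Import Classical_Prop.
Set Implicit Arguments. Unset Strict Implicit. Unset Printing Implicit Defensive.

(* Take an L'-formula in R with the fewest distinct subformulas. If two distinct
   subformulas x, y of it have the same type and the same meaning in every model
   of S, replace every occurrence of x by y, where x is chosen not to be a
   subformula of y. By the inductive property the result has the same meaning as
   the original in every model of S, so it is still in R; it is still an
   L'-formula, and it has strictly fewer distinct subformulas. Hence the distinct
   subformulas of a minimal witness are told apart by their type together with
   their meanings in the models of S, and there are at most
   sum_tau prod_M |SEM_M(tau)| such profiles. *)

Lemma size_le_prod_card (T : eqType) (I : Type) (F : I -> finType)
    (f : forall i, T -> F i) (A : forall i, {pred F i}) (s : seq I) (X : seq T) :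
  uniq X -> (forall i x, List.In i s -> x \in X -> f i x \in A i) ->
  {in X &, forall x y, (forall i, List.In i s -> f i x = f i y) -> x = y} ->
  size X <= \prod_(i <- s) #|A i|.
Proof.
elim: s X => [|i s IHs] X uX fA f_inj.
  rewrite big_nil; case: X uX f_inj {fA} => [|x [|y X]] //= uX f_inj.
  by move: uX; rewrite (f_inj x y) ?inE ?eqxx ?orbT.
rewrite big_cons -sum_nat_const -sum1_size big_seq.
rewrite (partition_big (f i) (mem (A i))) => [|x xX]; last by apply: fA => //; left.
apply: leq_sum => a _; rewrite sum1_count -size_filter.
apply: IHs => [|j x sj|x y]; first exact: filter_uniq.
  by rewrite mem_filter => /andP[_ xX]; apply: fA => //; right.
rewrite !mem_filter => /andP[/andP[_ /eqP fx] xX] /andP[/andP[_ /eqP fy] yX] fxy.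
by apply: f_inj => // j [<-|sj]; [rewrite fx fy | apply: fxy].
Qed.

Section Subformulas.
Variable L : logic.
Implicit Types t x y z : fm L.

Fixpoint fm_size t : nat :=
  match t with
  | F0 _ => 1
  | F1 _ a => (fm_size a).+1
  | F2 _ a b => (fm_size a + fm_size b).+1
  end.

Lemma subfms_refl t : t \in subfms t.
Proof. by case: t => * /=; rewrite inE eqxx. Qed.

Lemma subfms_trans t y z : y \in subfms t -> z \in subfms y -> z \in subfms t.
Proof.
elim: t => [o|o a IHa|o a IHa b IHb] /=; rewrite inE ?mem_cat.
- by move=> /eqP ->.
- by case/orP=> [/eqP -> //|/IHa yz /yz]; rewrite inE => ->; rewrite orbT.
- case/orP=> [/eqP -> //|/orP[/IHa yz /yz|/IHb yz /yz]];
  by rewrite inE mem_cat => ->; rewrite ?orbT.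
Qed.

Lemma subfms_size t z : z \in subfms t -> z = t \/ fm_size z < fm_size t.
Proof.
elim: t => [o|o a IHa|o a IHa b IHb] /=; rewrite inE ?mem_cat.
- by move=> /eqP ->; left.
- case/orP=> [/eqP ->|/IHa[->|lt]]; [by left|by right|right].
  exact: ltnW.
- case/orP=> [/eqP ->|/orP[/IHa[->|lt]|/IHb[->|lt]]]; [by left|right..].
  + by rewrite ltnS leq_addr.
  + by rewrite ltnS (leq_trans (ltnW lt)) ?leq_addr.
  + by rewrite ltnS leq_addl.
  + by rewrite ltnS (leq_trans (ltnW lt)) ?leq_addl.
Qed.

Lemma subfms_anti x y : x \in subfms y -> y \in subfms x -> x = y.
Proof.
move=> /subfms_size[// | ltxy] /subfms_size[// | ltyx].
by move: (ltn_trans ltxy ltyx); rewrite ltnn.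
Qed.

Lemma wt_subfms t z : wt t -> z \in subfms t -> wt z.
Proof.
elim: t => [o|o a IHa|o a IHa b IHb] /=; rewrite inE ?mem_cat.
- by move=> _ /eqP ->.
- by move=> /andP[wa ta] /orP[/eqP -> | /(IHa wa)] //=.
- by move=> /and4P[wa ta wb tb] /orP[/eqP -> | /orP[/(IHa wa) | /(IHb wb)]] //=.
Qed.

Lemma in_frag_subfms (L' : fragment L) t z : in_frag L' t -> z \in subfms t -> in_frag L' z.
Proof.
elim: t => [o|o a IHa|o a IHa b IHb] /=; rewrite inE ?mem_cat.
- by move=> ? /eqP ->.
- by move=> /andP[oL' aL'] /orP[/eqP -> | /(IHa aL')] //=.
- by move=> /and3P[oL' aL' bL'] /orP[/eqP -> | /orP[/(IHa aL') | /(IHb bL')]] //=.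
Qed.

End Subformulas.

Section Replace.
Variables (L : logic) (x y : fm L).
Implicit Types t z : fm L.

Fixpoint replace t : fm L :=
  if t == x then y else
  match t with
  | F0 _ => t
  | F1 o a => F1 o (replace a)
  | F2 o a b => F2 o (replace a) (replace b)
  end.

Lemma replace_self : replace x = y.
Proof. by case E: x => [o|o a|o a b] /=; rewrite -E eqxx. Qed.

Lemma replace_id t : x \notin subfms t -> replace t = t.
Proof.
elim: t => [o|o a IHa|o a IHa b IHb] /=; rewrite inE ?mem_cat eq_sym.
- by move=> /negbTE ->.
- by case/norP=> /negbTE -> /IHa ->.
- by case/norP=> /negbTE -> /norP[/IHa -> /IHb ->].
Qed.

Lemma fm_ty_replace t : fm_ty x = fm_ty y -> fm_ty (replace t) = fm_ty t.
Proof.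
move=> txy; have [->|] := eqVneq t x; first by rewrite replace_self.
by case: t => [o|o a|o a b] /= /negbTE ->.
Qed.

Lemma wt_replace t : wt y -> fm_ty x = fm_ty y -> wt t -> wt (replace t).
Proof.
move=> wy txy; elim: t => [o|o a IHa|o a IHa b IHb] /=; case: eqP => //= _.
- by case/andP=> /IHa -> ta; rewrite (fm_ty_replace _ txy) ta.
- by case/and4P=> /IHa -> ta /IHb -> tb; rewrite !(fm_ty_replace _ txy) ta tb.
Qed.

Lemma in_frag_replace (L' : fragment L) t :
  in_frag L' y -> in_frag L' t -> in_frag L' (replace t).
Proof.
move=> yL'; elim: t => [o|o a IHa|o a IHa b IHb] /=; case: eqP => //= _.
- by case/andP=> -> /IHa.
- by case/and3P=> -> /IHa -> /IHb.
Qed.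

Lemma subfms_replace t :
  {subset subfms (replace t) <= map replace (subfms t) ++ subfms y}.
Proof.
elim: t => [o|o a IHa|o a IHa b IHb] z /=; case: eqP => _ /=;
  try by move=> zy; rewrite inE ?mem_cat zy !orbT.
- by rewrite !inE => ->.
- rewrite !inE => /orP[-> // | /IHa].
  by rewrite !mem_cat => /orP[] ->; rewrite ?orbT.
- rewrite !inE !mem_cat => /orP[-> // | /orP[/IHa | /IHb]];
  by rewrite map_cat !mem_cat => /orP[] ->; rewrite ?orbT.
Qed.

Lemma sz_replace t :
  x \in subfms t -> y \in subfms t -> x != y -> x \notin subfms y -> sz (replace t) < sz t.
Proof.
move=> xt yt nxy xNy.
(* [replace] identifies the distinct subformulas [x] and [y]; hence the drop in [sz]. *)
have fixy z : z \in subfms y -> replace z = z.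
  by move=> zy; apply: replace_id; apply: contra xNy; apply: subfms_trans.
set s := undup (subfms t).
have xs : x \in s by rewrite mem_undup.
have img w : w \in subfms t -> replace w \in map replace (rem x s).
  move=> wt; have [->|nwx] := eqVneq w x.
    rewrite replace_self -{1}(fixy y (subfms_refl y)); apply: map_f.
    by rewrite mem_rem_uniq ?undup_uniq // inE eq_sym nxy mem_undup.
  by apply: map_f; rewrite mem_rem_uniq ?undup_uniq // inE nwx mem_undup.
have sub : {subset undup (subfms (replace t)) <= map replace (rem x s)}.
  move=> z; rewrite mem_undup => /subfms_replace; rewrite mem_cat.
  case/orP=> [/mapP[w wt ->] | zy]; first exact: img.
  by rewrite -(fixy z zy); apply/img/(subfms_trans yt zy).
apply: leq_ltn_trans (uniq_leq_size (undup_uniq _) sub) _.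
by rewrite /sz -/s (perm_size (perm_to_rem xs)) size_map.
Qed.

End Replace.

Lemma sem_replace (L : logic) (Model : Type) (sat : Model -> fm L -> Prop) (M : Model)
    (SEM : finType) (semty : SEM -> ty L) (sem : fm L -> SEM) (x y t : fm L) :
  LM_pair sat M semty sem -> wt y -> fm_ty x = fm_ty y -> sem x = sem y ->
  wt t -> sem (replace x y t) = sem t.
Proof.
case=> _ [_ [sem1 sem2]] wy txy sxy.
have in_Fm_replace (X : {set ty L}) a : wt a -> fm_ty a \in X -> in_Fm X (replace x y a).
  by move=> wa tX; rewrite /in_Fm wt_replace // fm_ty_replace.
elim: t => [o|o a IHa|o a IHa b IHb] /=; case: eqP => [-> _ | _ /=]; rewrite -?sxy //.
- case/andP=> wa ta; have [f [_ semf]] := sem1 o.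
  by rewrite !semf ?in_Fm_replace ?IHa // /in_Fm wa.
- case/and4P=> wa ta wb tb; have [f [_ semf]] := sem2 o.
  by rewrite !semf ?in_Fm_replace ?IHa ?IHb // /in_Fm ?wa ?wb.
Qed.

Section Learning.
Variables (L : logic) (L' : fragment L) (Model : Type) (sat : Model -> fm L -> Prop)
  (SEM : Model -> finType) (semty : forall M, SEM M -> ty L)
  (sem : forall M, fm L -> SEM M) (S : list Model) (R : fm L -> Prop).
Hypothesis pairS : forall M, List.In M S -> LM_pair sat M (@semty M) (@sem M).
Hypothesis learnR : learning_property sat S R.
Implicit Types phi psi x y : fm L.

Local Notation bound := (\sum_(tau : ty L) \prod_(M <- S) card_sem (@semty M) tau).

Definition sem_equiv x y := forall M, List.In M S -> sem M x = sem M y.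

Lemma learning_property_sem_equiv phi psi :
  R psi -> is_final phi -> fm_ty phi = fm_ty psi -> sem_equiv phi psi -> R phi.
Proof.
move=> Rpsi fin_phi tphi sphi; apply/(proj2 learnR _ fin_phi).
exists psi => // M SM; apply: (proj1 (proj2 (pairS SM))) => //.
- exact: (proj1 learnR).
- exact: sphi.
Qed.

Lemma replace_shrinks_witness phi x y :
  in_frag L' phi -> R phi -> x \in subfms phi -> y \in subfms phi -> x != y ->
  x \notin subfms y -> fm_ty x = fm_ty y -> sem_equiv x y ->
  [/\ in_frag L' (replace x y phi), R (replace x y phi) & sz (replace x y phi) < sz phi].
Proof.
move=> phiL' Rphi xphi yphi nxy xNy txy sxy.
have /andP[wphi tphi] := proj1 learnR _ Rphi.
have wy := wt_subfms wphi yphi.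
split; last exact: sz_replace.
- exact: in_frag_replace (in_frag_subfms phiL' yphi) phiL'.
- apply: learning_property_sem_equiv Rphi _ (fm_ty_replace _ txy) _.
    by rewrite /is_final /in_Fm wt_replace // fm_ty_replace.
  by move=> M SM; apply: sem_replace (pairS SM) wy txy (sxy M SM) wphi.
Qed.

Lemma sz_le_bound phi :
  wt phi -> {in subfms phi &, forall x y, fm_ty x = fm_ty y -> sem_equiv x y -> x = y} ->
  sz phi <= bound.
Proof.
move=> wphi sem_inj; rewrite /sz -sum1_size big_seq.
rewrite (partition_big (@fm_ty L) predT) //; apply: leq_sum => tau _.
rewrite sum1_count -size_filter.
rewrite /card_sem; apply: (size_le_prod_card (f := sem)).
- exact/filter_uniq/undup_uniq.
- move=> M z SM; rewrite mem_filter mem_undup => /andP[/andP[_ /eqP <-] zphi].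
  by rewrite inE (proj1 (pairS SM)) // (wt_subfms wphi zphi).
- move=> x y; rewrite !mem_filter !mem_undup.
  move=> /andP[/andP[_ /eqP tx] xphi] /andP[/andP[_ /eqP ty] yphi] sxy.
  by apply: sem_inj => //; rewrite tx ty.
Qed.

Lemma exists_small_witness phi :
  in_frag L' phi -> R phi -> exists psi, [/\ in_frag L' psi, R psi & sz psi <= bound].
Proof.
have [n] := ubnP (sz phi); elim: n phi => // n IHn phi szn phiL' Rphi.
have [[x [y [xphi yphi nxy txy sxy]]] | sep] := classic (exists x y,
  [/\ x \in subfms phi, y \in subfms phi, x != y, fm_ty x = fm_ty y & sem_equiv x y]).
- wlog xNy : x y xphi yphi nxy txy sxy / x \notin subfms y.
    move=> gen; have [xy|] := boolP (x \in subfms y); last exact: gen.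
    apply: (gen y x) => //; first by rewrite eq_sym.
    + by move=> M SM; rewrite sxy.
    + by apply: contra nxy => yx; rewrite (subfms_anti xy yx).
  have [phi'L' Rphi' lt] := replace_shrinks_witness phiL' Rphi xphi yphi nxy xNy txy sxy.
  exact: IHn (leq_trans lt szn) phi'L' Rphi'.
- exists phi; split => //; apply: sz_le_bound.
    by have /andP[] := proj1 learnR _ Rphi.
  move=> x y xphi yphi txy sxy; have [// | nxy] := eqVneq x y.
  by case: sep; exists x, y.
Qed.

End Learning.

Theorem proposition6 (L : logic) (L' : fragment L) (Model : Type)
  (sat : Model -> fm L -> Prop) (C : Model -> Prop)
  (SEM : Model -> finType) (semty : forall M, SEM M -> ty L)
  (sem : forall M, fm L -> SEM M)
  (S : list Model) (R : fm L -> Prop) :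
  LC_pair sat C semty sem ->
  List.NoDup S -> (forall M, List.In M S -> C M) ->
  learning_property sat S R ->
  (exists phi, in_frag L' phi /\ R phi) ->
  exists psi, [/\ in_frag L' psi, R psi &
    (sz psi <= \sum_(tau : ty L) \prod_(M <- S) card_sem (@semty M) tau)%N].
Proof.
move=> pairC _ SC learnR [phi [phiL' Rphi]].
have pairS M : List.In M S -> LM_pair sat M (@semty M) (@sem M) by move/SC/pairC.
exact: (exists_small_witness pairS learnR phiL' Rphi).
Qed.
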